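(* Let $I$ be a countable set with a quasi-distance $d$ such that $\sup_{i\in I}|B_R(i)|<\infty$ for every $R>0$. Let $\mathcal{C}\subset B(\ell^2(I))$ be the set of non-expansive operators. Then: (1) if $A,B\in\mathcal{C}$ and $c\in\mathbb{C}$ then $A+B\in\mathcal{C}$ and $cA\in\mathcal{C}$; (2) if $A,B\in\mathcal{C}$ then $AB\in\mathcal{C}$; (3) if $\mathcal{J}$ is a filter on a set $S$, $A_j\in\mathcal{C}$ for all $j\in S$, and $\lim_{j\to\mathcal{J}}\|A-A_j\|=0$ for some $A\in B(\ell^2(I))$, then $A\in\mathcal{C}$. Consequently $\mathcal{C}$ is a $C^*$-algebra.
   Context: A quasi-distance on $I$ is $d:I\times I\to[0,\infty)$ with $d(i,i)=0$, $d(i,j)=d(j,i)$, $d(i,j)\le d(i,k)+d(k,j)$. $B_R(i)=\{j\in I:d(j,i)\le R\}$. $\{\delta_i\}_{i\in I}$ is the canonical orthonormal basis of $\ell^2(I)$. An operator $A\in B(\ell^2(I))$ is row non-expansive if for every $\varepsilon>0$ there exists $N>0$ with $\sum_{j\in I\setminus B_N(i)}|\langle A\delta_i,\delta_j\rangle|^2<\varepsilon$ for all $i\in I$; $A$ is non-expansive if both $A$ and $A^*$ are row non-expansive. The limit along a filter: $\lim_{j\to\mathcal{J}}\|A-A_j\|=0$ means for every $\varepsilon>0$ the set $\{j:\|A-A_j\|<\varepsilon\}$ belongs to $\mathcal{J}$. *)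

From Stdlib Require Import Reals List ClassicalEpsilon.
From Coquelicot Require Import Coquelicot.
Open Scope R_scope.

Section L2.
Variable I : Type.

(* An "operator" is a map on all functions I -> C; only its restriction to
   l^2(I) matters. *)
Definition vec := I -> C.
Definition op := vec -> vec.

Definition sqsum (x : vec) (l : list I) : R :=
  fold_right (fun i acc => Cmod (x i) ^ 2 + acc) 0 l.

Definition sqsum_le (x : vec) (S : R) : Prop :=
  forall l : list I, NoDup l -> sqsum x l <= S.

Definition l2 (x : vec) : Prop := exists S, sqsum_le x S.

Definition delta (i : I) : vec :=
  fun j => if excluded_middle_informative (j = i) then 1%C else 0%C.

Definition opnorm_le (A : op) (c : R) : Prop :=
  forall x S, sqsum_le x S -> sqsum_le (A x) (c ^ 2 * S).

Definition bounded_op (A : op) : Prop :=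
  (forall x y, l2 x -> l2 y ->
     A (fun k => (x k + y k)%C) = (fun k => (A x k + A y k)%C)) /\
  (forall (c : C) x, l2 x -> A (fun k => (c * x k)%C) = (fun k => (c * A x k)%C)) /\
  (exists M, 0 <= M /\ opnorm_le A M).

Definition op_add (A B : op) : op := fun x k => (A x k + B x k)%C.
Definition op_scal (c : C) (A : op) : op := fun x k => (c * A x k)%C.
Definition op_sub (A B : op) : op := fun x k => (A x k - B x k)%C.
Definition op_mul (A B : op) : op := fun x => A (B x).

Variable d : I -> I -> R.

Definition quasi_distance : Prop :=
  (forall i j, 0 <= d i j) /\ (forall i, d i i = 0) /\
  (forall i j, d i j = d j i) /\ (forall i j k, d i j <= d i k + d k j).

(* m i j stands for <T delta_i, delta_j>.  Row non-expansive:
   forall eps>0 exists N>0, forall i,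
   sum_{j notin B_N(i)} |m i j|^2 < eps  (the sum is an unordered sum of
   nonnegative terms, i.e. the sup of finite partial sums). *)
Definition row_nonexp_entries (m : I -> I -> C) : Prop :=
  forall eps, 0 < eps -> exists N, 0 < N /\
    forall i, exists S, S < eps /\
      forall l : list I, NoDup l -> (forall j, In j l -> N < d j i) ->
        fold_right (fun j acc => Cmod (m i j) ^ 2 + acc) 0 l <= S.

(* <A delta_i, delta_j> = (A delta_i) j, and
   <A^* delta_i, delta_j> = <delta_i, A delta_j> = conj ((A delta_j) i). *)
Definition nonexpansive (A : op) : Prop :=
  row_nonexp_entries (fun i j => A (delta i) j) /\
  row_nonexp_entries (fun i j => Cconj (A (delta j) i)).

Definition inC (A : op) : Prop := bounded_op A /\ nonexpansive A.

End L2.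

Arguments sqsum {I}. Arguments sqsum_le {I}. Arguments l2 {I}.
Arguments delta {I}. Arguments opnorm_le {I}. Arguments bounded_op {I}.
Arguments op_add {I}. Arguments op_scal {I}. Arguments op_sub {I}.
Arguments op_mul {I}. Arguments quasi_distance {I}.
Arguments row_nonexp_entries {I}. Arguments nonexpansive {I}. Arguments inC {I}.

From Stdlib Require Import Reals List ClassicalEpsilon.
From Coquelicot Require Import Coquelicot.
From Stdlib Require Import Lra Lia Psatz FunctionalExtensionality Classical.
Open Scope R_scope.

(* All estimates are on the matrix entries <A delta_i, delta_j>.  Sums, scalar
   multiples and adjoints are entrywise.  For a norm limit, the entries of A
   differ from those of A_j by the vector (A - A_j) delta_i or, on the adjoint
   side, by the family ((A - A_j) delta_j)_i over j; both have squared norm at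
   most |A - A_j|^2, the latter by testing A - A_j against its conjugate.

   For a product, split B delta_i into its part inside a ball B_R(i) and the
   rest.  The rest is small because B is row non-expansive; the inside part is
   a combination of at most sup |B_R| basis vectors delta_j, and by the
   triangle inequality A delta_j has a small tail far from i.  Columns of AB
   are handled in the dual form: T is column non-expansive iff
   |(T x)_i|^2 <= eps |x|^2 whenever x vanishes on a large ball around i
   ([col_decay]), and the same splitting argument applies to that form. *)

Lemma sq_le_of_le_sum (x y z : R) : 0 <= x -> x <= y + z -> x ^ 2 <= 2 * y ^ 2 + 2 * z ^ 2.
Proof.
  intros Hx Hxyz. assert (x ^ 2 <= (y + z) ^ 2) by (apply pow_incr; lra).
  pose proof (pow2_ge_0 (y - z)). nra.
Qed.

Lemma mul_div_succ_le (a e : R) : 0 <= a -> 0 <= e -> a * (e / (a + 1)) <= e.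
Proof.
  intros Ha He. replace (a * (e / (a + 1))) with (e - e / (a + 1)) by (field; lra).
  assert (0 <= e / (a + 1)) by (apply Rdiv_le_0_compat; lra). lra.
Qed.

Lemma Cmod_plus_sq (a b : C) : Cmod (a + b) ^ 2 <= 2 * Cmod a ^ 2 + 2 * Cmod b ^ 2.
Proof.
  apply sq_le_of_le_sum; [apply Cmod_ge_0 | apply Cmod_triangle].
Qed.

Definition rsum {I : Type} (f : I -> R) (l : list I) : R :=
  fold_right (fun j acc => f j + acc) 0 l.
Definition csum {I : Type} (f : I -> C) (l : list I) : C :=
  fold_right (fun j acc => (f j + acc)%C) 0%C l.

Section ListSums.
Context {I : Type}.
Implicit Types (f g : I -> R) (l : list I).

Lemma rsum_cons f a l : rsum f (a :: l) = f a + rsum f l.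
Proof. reflexivity. Qed.

Lemma rsum_app f l1 l2 : rsum f (l1 ++ l2) = rsum f l1 + rsum f l2.
Proof. induction l1; simpl; [lra | rewrite IHl1; lra]. Qed.

Lemma rsum_le f g l : (forall k, In k l -> f k <= g k) -> rsum f l <= rsum g l.
Proof. induction l; simpl; intros H; [lra|]. apply Rplus_le_compat; auto. Qed.

Lemma rsum_ext f g l : (forall k, In k l -> f k = g k) -> rsum f l = rsum g l.
Proof. induction l; simpl; intros H; [reflexivity|]. rewrite H, IHl; auto. Qed.

Lemma rsum_nonneg f l : (forall k, 0 <= f k) -> 0 <= rsum f l.
Proof. intros H. induction l; simpl; [lra|]. specialize (H a). lra. Qed.

Lemma rsum_plus f g l : rsum (fun k => f k + g k) l = rsum f l + rsum g l.
Proof. induction l; simpl; lra. Qed.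

Lemma rsum_scal c f l : rsum (fun k => c * f k) l = c * rsum f l.
Proof. induction l; simpl; [lra | rewrite IHl; lra]. Qed.

Lemma rsum_le_length_mul f l c :
  (forall k, In k l -> f k <= c) -> rsum f l <= INR (length l) * c.
Proof.
  induction l as [|a l IH]; intros H; [simpl; lra|].
  cbn [length]. rewrite S_INR, rsum_cons.
  specialize (IH (fun k h => H k (or_intror h))). specialize (H a (or_introl eq_refl)). lra.
Qed.

Lemma rsum_le_of_length_le f l n e S :
  (length l <= n)%nat -> 0 <= e -> 0 <= S ->
  (forall k, In k l -> f k <= e / (INR n + 1) * S) -> rsum f l <= e * S.
Proof.
  intros Hlen He HS Hf. eapply Rle_trans; [apply rsum_le_length_mul, Hf|].
  pose proof (pos_INR n). rewrite <- Rmult_assoc. apply Rmult_le_compat_r; [exact HS|].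
  eapply Rle_trans; [| apply (mul_div_succ_le (INR n) e); lra].
  apply Rmult_le_compat_r; [apply Rdiv_le_0_compat; lra | apply le_INR, Hlen].
Qed.

Lemma rsum_le_incl f l' l :
  (forall k, 0 <= f k) -> NoDup l' -> incl l' l -> rsum f l' <= rsum f l.
Proof.
  intros Hf Hl'. revert l. induction Hl' as [|a l' Ha Hl' IH]; intros l Hinc; simpl.
  - apply rsum_nonneg; auto.
  - destruct (in_split a l (Hinc a (or_introl eq_refl))) as [l1 [l2 ->]].
    assert (rsum f l' <= rsum f (l1 ++ l2)).
    { apply IH. intros k Hk. specialize (Hinc k (or_intror Hk)).
      apply in_app_or in Hinc. apply in_or_app.
      destruct Hinc as [h | [<- | h]]; tauto. }
    rewrite rsum_app in *. simpl. lra.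
Qed.

Definition predb (P : I -> Prop) (k : I) : bool :=
  if excluded_middle_informative (P k) then true else false.

Lemma filter_predb_In P k l : In k (filter (predb P) l) <-> In k l /\ P k.
Proof.
  rewrite filter_In. unfold predb.
  destruct (excluded_middle_informative (P k)); intuition discriminate.
Qed.

Lemma Cmod_csum_le (f : I -> C) l : Cmod (csum f l) <= rsum (fun k => Cmod (f k)) l.
Proof.
  induction l; simpl.
  - rewrite Cmod_0. lra.
  - eapply Rle_trans; [apply Cmod_triangle | lra].
Qed.

Lemma csum_RtoC f l : csum (fun k => RtoC (f k)) l = RtoC (rsum f l).
Proof. induction l; simpl; [reflexivity | rewrite IHl, RtoC_plus; reflexivity]. Qed.

Lemma csum_ext (f g : I -> C) l : (forall k, In k l -> f k = g k) -> csum f l = csum g l.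
Proof. induction l; simpl; intros H; [reflexivity|]. rewrite H, IHl; auto. Qed.

Lemma rsum_mul_sq_le (f g : I -> R) l :
  (rsum (fun k => f k * g k) l) ^ 2 <= rsum (fun k => f k ^ 2) l * rsum (fun k => g k ^ 2) l.
Proof.
  induction l as [|a l IH]; [simpl; lra|].
  rewrite !rsum_cons.
  set (p := rsum (fun k => f k * g k) l) in *.
  set (P := rsum (fun k => f k ^ 2) l) in *.
  set (Q := rsum (fun k => g k ^ 2) l) in *.
  assert (HP : 0 <= P) by (apply rsum_nonneg; intros; apply pow2_ge_0).
  assert (HQ : 0 <= Q) by (apply rsum_nonneg; intros; apply pow2_ge_0).
  (* 2 f g p <= f^2 Q + g^2 P, since (2 f g p)^2 <= 4 f^2 g^2 P Q <= (f^2 Q + g^2 P)^2 *)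
  assert (Hcross : 2 * (f a * g a * p) <= f a ^ 2 * Q + g a ^ 2 * P).
  { assert (0 <= f a ^ 2 * Q + g a ^ 2 * P)
      by (pose proof (pow2_ge_0 (f a)); pose proof (pow2_ge_0 (g a)); nra).
    apply Rsqr_incr_0_var; [unfold Rsqr | assumption].
    pose proof (pow2_ge_0 (f a ^ 2 * Q - g a ^ 2 * P)).
    assert (0 <= (f a * g a) ^ 2 * (P * Q - p ^ 2))
      by (apply Rmult_le_pos; [apply pow2_ge_0 | lra]).
    nra. }
  nra.
Qed.

Lemma Cmod_csum_mul_sq_le (x t : I -> C) l :
  Cmod (csum (fun j => (x j * t j)%C) l) ^ 2
  <= rsum (fun k => Cmod (x k) ^ 2) l * rsum (fun k => Cmod (t k) ^ 2) l.
Proof.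
  eapply Rle_trans; [| apply (rsum_mul_sq_le (fun k => Cmod (x k)) (fun k => Cmod (t k)))].
  apply pow_incr. split; [apply Cmod_ge_0|].
  eapply Rle_trans; [apply Cmod_csum_le|].
  right. apply rsum_ext. intros. apply Cmod_mult.
Qed.

End ListSums.

Lemma rsum_comm {I J : Type} (f : I -> J -> R) (l : list I) (l' : list J) :
  rsum (fun i => rsum (f i) l') l = rsum (fun j => rsum (fun i => f i j) l) l'.
Proof.
  induction l as [|a l IHl]; simpl.
  - induction l'; simpl; lra.
  - rewrite IHl, <- rsum_plus. reflexivity.
Qed.

Section Vectors.
Context {I : Type}.
Implicit Types (x y w : vec I) (l L : list I) (T : op I).

Lemma sqsum_rsum x l : sqsum x l = rsum (fun k => Cmod (x k) ^ 2) l.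
Proof. reflexivity. Qed.

Lemma sqsum_le_nonneg x S : sqsum_le x S -> 0 <= S.
Proof. intros H. exact (H nil (NoDup_nil _)). Qed.

Lemma sqsum_le_weaken x S S' : sqsum_le x S -> S <= S' -> sqsum_le x S'.
Proof. intros H HS l Hl. specialize (H l Hl). lra. Qed.

Lemma sqsum_le_coord x S k : sqsum_le x S -> Cmod (x k) ^ 2 <= S.
Proof.
  intros H. specialize (H (k :: nil) (NoDup_cons _ (@in_nil _ k) (NoDup_nil _))).
  simpl in H. lra.
Qed.

Lemma opnorm_le_coord T c x S k :
  opnorm_le T c -> sqsum_le x S -> Cmod (T x k) ^ 2 <= c ^ 2 * S.
Proof. intros HT Hx. apply sqsum_le_coord, HT, Hx. Qed.

Lemma sqsum_le_dom x y S :
  (forall k, Cmod (y k) <= Cmod (x k)) -> sqsum_le x S -> sqsum_le y S.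
Proof.
  intros Hd Hx l Hl. eapply Rle_trans; [| exact (Hx l Hl)].
  apply rsum_le. intros k _. apply pow_incr. split; [apply Cmod_ge_0 | apply Hd].
Qed.

Lemma sqsum_le_add x y S S' :
  sqsum_le x S -> sqsum_le y S' -> sqsum_le (fun k => x k + y k)%C (2 * S + 2 * S').
Proof.
  intros Hx Hy l Hl. specialize (Hx l Hl). specialize (Hy l Hl). rewrite sqsum_rsum in *.
  eapply Rle_trans.
  - apply rsum_le with (g := fun k => 2 * Cmod (x k) ^ 2 + 2 * Cmod (y k) ^ 2).
    intros. apply Cmod_plus_sq.
  - rewrite rsum_plus, !rsum_scal. lra.
Qed.

Lemma sqsum_le_scal c x S :
  sqsum_le x S -> sqsum_le (fun k => c * x k)%C (Cmod c ^ 2 * S).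
Proof.
  intros Hx l Hl. specialize (Hx l Hl). rewrite sqsum_rsum in *.
  rewrite (rsum_ext _ (fun k => Cmod c ^ 2 * Cmod (x k) ^ 2)), rsum_scal.
  - apply Rmult_le_compat_l; [apply pow2_ge_0 | exact Hx].
  - intros. rewrite Cmod_mult. ring.
Qed.

Definition restrict (P : I -> Prop) x : vec I :=
  fun k => if excluded_middle_informative (P k) then x k else 0%C.

Lemma restrict_in P x k : P k -> restrict P x k = x k.
Proof. unfold restrict. destruct (excluded_middle_informative (P k)); tauto. Qed.

Lemma restrict_out P x k : ~ P k -> restrict P x k = 0%C.
Proof. unfold restrict. destruct (excluded_middle_informative (P k)); tauto. Qed.

Lemma restrict_split P x :
  x = (fun k => restrict P x k + restrict (fun k => ~ P k) x k)%C.
Proof.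
  apply functional_extensionality. intros k.
  destruct (classic (P k)).
  - rewrite restrict_in, restrict_out by tauto. ring.
  - rewrite restrict_out, restrict_in by tauto. ring.
Qed.

Lemma sqsum_restrict P x l : sqsum (restrict P x) l = sqsum x (filter (predb P) l).
Proof.
  induction l as [|a l IH]; [reflexivity|]. simpl. unfold predb at 1.
  destruct (excluded_middle_informative (P a)).
  - rewrite restrict_in by assumption. simpl. rewrite IH. reflexivity.
  - rewrite restrict_out, Cmod_0, IH by assumption. simpl. ring.
Qed.

Lemma sqsum_le_restrict P x S : sqsum_le x S -> sqsum_le (restrict P x) S.
Proof.
  apply sqsum_le_dom. intros k. unfold restrict.
  destruct (excluded_middle_informative (P k)); [lra|].
  rewrite Cmod_0. apply Cmod_ge_0.
Qed.

Lemma l2_restrict P x : l2 x -> l2 (restrict P x).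
Proof. intros [S HS]. exists S. apply sqsum_le_restrict, HS. Qed.

Lemma sqsum_le_restrict_list x L :
  NoDup L -> sqsum_le (restrict (fun k => In k L) x) (sqsum x L).
Proof.
  intros HL l Hl. rewrite sqsum_restrict, !sqsum_rsum.
  apply rsum_le_incl.
  - intros. apply pow2_ge_0.
  - apply NoDup_filter, Hl.
  - intros k Hk. apply filter_predb_In in Hk. tauto.
Qed.

Lemma delta_same (i : I) : delta i i = 1%C.
Proof. unfold delta. destruct (excluded_middle_informative (i = i)); congruence. Qed.

Lemma delta_other (i j : I) : j <> i -> delta i j = 0%C.
Proof. unfold delta. destruct (excluded_middle_informative (j = i)); congruence. Qed.

Lemma delta_restrict (i : I) : delta i = restrict (fun k => In k (i :: nil)) (delta i).
Proof.
  apply functional_extensionality. intros k. destruct (classic (k = i)) as [-> | Hk].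
  - rewrite restrict_in; [reflexivity | left; reflexivity].
  - rewrite restrict_out, delta_other by (simpl; intuition). reflexivity.
Qed.

Lemma sqsum_le_delta (i : I) : sqsum_le (delta i) 1.
Proof.
  rewrite delta_restrict. eapply sqsum_le_weaken.
  - apply sqsum_le_restrict_list, NoDup_cons, NoDup_nil. apply in_nil.
  - simpl. rewrite delta_same, Cmod_1. lra.
Qed.

Lemma l2_delta (i : I) : l2 (delta i).
Proof. exists 1. apply sqsum_le_delta. Qed.

Definition vec0 : vec I := fun _ => 0%C.

Lemma l2_vec0 : l2 vec0.
Proof.
  exists 0. intros l _. induction l as [|a l IH]; [simpl; lra|].
  change (sqsum vec0 (a :: l)) with (Cmod (vec0 a) ^ 2 + sqsum vec0 l).
  unfold vec0 at 1. rewrite Cmod_0. lra.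
Qed.

Definition linear_l2 T : Prop :=
  (forall x y, l2 x -> l2 y -> T (fun k => x k + y k)%C = (fun k => T x k + T y k)%C) /\
  (forall (c : C) x, l2 x -> T (fun k => c * x k)%C = (fun k => c * T x k)%C).

Lemma bounded_op_linear T : bounded_op T -> linear_l2 T.
Proof. intros [Hadd [Hscal _]]. split; assumption. Qed.

Lemma linear_l2_sub A B : linear_l2 A -> linear_l2 B -> linear_l2 (op_sub A B).
Proof.
  intros [HA1 HA2] [HB1 HB2]. unfold op_sub. split.
  - intros x y Hx Hy. rewrite HA1, HB1 by assumption.
    apply functional_extensionality. intros. ring.
  - intros c x Hx. rewrite HA2, HB2 by assumption.
    apply functional_extensionality. intros. ring.
Qed.

Lemma linear_l2_vec0 T : linear_l2 T -> T vec0 = vec0.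
Proof.
  intros [_ Hscal]. pose proof (Hscal 0%C _ l2_vec0) as H. unfold vec0 in *.
  assert (E : (fun _ : I => (0 * 0)%C) = (fun _ : I => RtoC 0))
    by (apply functional_extensionality; intros; ring).
  rewrite E in H. rewrite H. apply functional_extensionality. intros. ring.
Qed.

Lemma linear_l2_split T P x k :
  linear_l2 T -> l2 x ->
  T x k = (T (restrict P x) k + T (restrict (fun k => ~ P k) x) k)%C.
Proof.
  intros [Hadd _] Hx. rewrite (restrict_split P x) at 1.
  rewrite Hadd by (apply l2_restrict, Hx). reflexivity.
Qed.

Lemma linear_l2_restrict_list T L w k :
  linear_l2 T -> NoDup L ->
  T (restrict (fun k => In k L) w) k = csum (fun j => w j * T (delta j) k)%C L.
Proof.
  intros HT HL. revert k. induction HL as [|a L Ha HL IH]; intros k.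
  - replace (restrict (fun k => In k nil) w) with vec0
      by (apply functional_extensionality; intros; rewrite restrict_out; auto).
    rewrite linear_l2_vec0 by assumption. reflexivity.
  - destruct HT as [Hadd Hscal].
    replace (restrict (fun k => In k (a :: L)) w)
      with (fun k => (w a * delta a k) + restrict (fun k => In k L) w k)%C.
    + rewrite Hadd, Hscal.
      * simpl. rewrite IH. reflexivity.
      * apply l2_delta.
      * exists (Cmod (w a) ^ 2 * 1). apply sqsum_le_scal, sqsum_le_delta.
      * exists (sqsum w L). apply sqsum_le_restrict_list, HL.
    + apply functional_extensionality. intros j. destruct (classic (j = a)) as [-> | Hj].
      * rewrite delta_same, (restrict_in _ _ a (or_introl eq_refl)), restrict_out by exact Ha.
        ring.
      * rewrite delta_other by assumption. unfold restrict.
        destruct (excluded_middle_informative (In j L)),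
          (excluded_middle_informative (In j (a :: L)));
          simpl in *; try ring; exfalso; intuition congruence.
Qed.

Lemma linear_l2_restrict_list_sq_le T L w k :
  linear_l2 T -> NoDup L ->
  Cmod (T (restrict (fun k => In k L) w) k) ^ 2
  <= sqsum w L * rsum (fun j => Cmod (T (delta j) k) ^ 2) L.
Proof.
  intros HT HL. rewrite linear_l2_restrict_list by assumption.
  apply Cmod_csum_mul_sq_le.
Qed.

(* Apply the bound to y = (conj (T delta_j)_i)_{j in L}: both (T y)_i and
   |y|^2 equal the sum Q on the left, so Q^2 <= K Q. *)
Lemma adj_row_sqsum_le_of_coord_bound T L i K :
  linear_l2 T -> NoDup L -> 0 <= K ->
  (forall x S, sqsum_le x S -> (forall k, ~ In k L -> x k = 0%C) -> Cmod (T x i) ^ 2 <= K * S) ->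
  rsum (fun j => Cmod (T (delta j) i) ^ 2) L <= K.
Proof.
  intros HT HL HK Hbound.
  set (Q := rsum (fun j => Cmod (T (delta j) i) ^ 2) L).
  set (y := restrict (fun k => In k L) (fun k => Cconj (T (delta k) i))).
  assert (HQ : 0 <= Q) by (apply rsum_nonneg; intros; apply pow2_ge_0).
  assert (Hy : T y i = RtoC Q).
  { unfold y, Q. rewrite linear_l2_restrict_list, <- csum_RtoC by assumption.
    apply csum_ext. intros j _. rewrite Cmod2_conj. ring. }
  assert (Hny : sqsum_le y Q).
  { eapply sqsum_le_weaken; [apply sqsum_le_restrict_list, HL |].
    right. apply rsum_ext. intros j _. rewrite Cmod_conj. reflexivity. }
  specialize (Hbound y Q Hny (fun k Hk => restrict_out _ _ k Hk)).
  rewrite Hy, Cmod_R, Rabs_pos_eq in Hbound by exact HQ.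
  destruct (Rle_dec Q K); [assumption | nra].
Qed.

Lemma adj_row_sqsum_le_opnorm T c L i :
  linear_l2 T -> opnorm_le T c -> NoDup L ->
  rsum (fun j => Cmod (T (delta j) i) ^ 2) L <= c ^ 2.
Proof.
  intros HT Hc HL. apply adj_row_sqsum_le_of_coord_bound; try assumption.
  - apply pow2_ge_0.
  - intros x S Hx _. exact (opnorm_le_coord T c x S i Hc Hx).
Qed.

(* The finite partial sums of |x_k|^2 have a supremum; a partial sum over F
   within eta of it leaves at most eta outside F. *)
Lemma sqsum_le_tail x S eta :
  sqsum_le x S -> 0 < eta ->
  exists F, NoDup F /\ sqsum_le (restrict (fun k => ~ In k F) x) eta.
Proof.
  intros Hx Heta.
  set (E := fun r => exists l, NoDup l /\ r = sqsum x l).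
  assert (HE : bound E) by (exists S; intros r [l [Hl ->]]; apply Hx, Hl).
  assert (HE0 : exists r, E r) by (exists 0, nil; split; [constructor | reflexivity]).
  destruct (completeness E HE HE0) as [s [Hub Hlub]].
  assert (HF : exists F, NoDup F /\ s - eta < sqsum x F).
  { apply NNPP. intros Hno. assert (s <= s - eta); [| lra].
    apply Hlub. intros r [l [Hl ->]]. apply Rnot_lt_le. intros Hlt. apply Hno. exists l. auto. }
  destruct HF as [F [HF HsF]]. exists F. split; [assumption|].
  intros l Hl. rewrite sqsum_restrict.
  set (l' := filter (predb (fun k => ~ In k F)) l).
  assert (Hl' : NoDup (l' ++ F)).
  { apply NoDup_app; [apply NoDup_filter, Hl | assumption |].
    intros k Hk. apply filter_predb_In in Hk. tauto. }
  assert (Hs : sqsum x (l' ++ F) <= s) by (apply Hub; exists (l' ++ F); auto).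
  rewrite sqsum_rsum, rsum_app in Hs. rewrite sqsum_rsum in *. lra.
Qed.

End Vectors.

Section RowDecay.
Context {I : Type} (d : I -> I -> R).
Implicit Types (m : I -> I -> C) (T : op I).

Definition row_tail_le m N eps : Prop :=
  forall i l, NoDup l -> (forall j, In j l -> N < d j i) ->
    rsum (fun j => Cmod (m i j) ^ 2) l <= eps.

Lemma row_nonexp_entries_tail m eps :
  row_nonexp_entries d m -> 0 < eps -> exists N, 0 < N /\ row_tail_le m N eps.
Proof.
  intros Hm Heps. destruct (Hm eps Heps) as [N [HN HmN]].
  exists N. split; [assumption|]. intros i l Hl Hfar.
  destruct (HmN i) as [S [HS HlS]]. specialize (HlS l Hl Hfar). unfold rsum. lra.
Qed.

Lemma row_nonexp_entries_of_tail m K :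
  0 <= K -> (forall eps, 0 < eps -> exists N, 0 < N /\ row_tail_le m N (K * eps)) ->
  row_nonexp_entries d m.
Proof.
  intros HK Hm eps Heps.
  assert (Heps' : 0 < eps / (2 * (K + 1))) by (apply Rdiv_lt_0_compat; lra).
  destruct (Hm _ Heps') as [N [HN HmN]]. exists N. split; [assumption|]. intros i.
  exists (K * (eps / (2 * (K + 1)))). split.
  - replace (K * (eps / (2 * (K + 1)))) with (eps / 2 - eps / (2 * (K + 1))) by (field; lra).
    lra.
  - intros l Hl Hfar. exact (HmN i l Hl Hfar).
Qed.

Lemma row_nonexp_entries_add m m1 m2 :
  row_nonexp_entries d m1 -> row_nonexp_entries d m2 ->
  (forall i j, Cmod (m i j) <= Cmod (m1 i j) + Cmod (m2 i j)) ->
  row_nonexp_entries d m.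
Proof.
  intros H1 H2 Hm. apply (row_nonexp_entries_of_tail _ 4); [lra|]. intros eps Heps.
  destruct (row_nonexp_entries_tail _ _ H1 Heps) as [N1 [HN1 T1]].
  destruct (row_nonexp_entries_tail _ _ H2 Heps) as [N2 [HN2 T2]].
  exists (Rmax N1 N2). split; [apply (Rlt_le_trans _ N1); [assumption | apply Rmax_l]|].
  intros i l Hl Hfar.
  specialize (T1 i l Hl (fun j Hj => Rle_lt_trans _ _ _ (Rmax_l N1 N2) (Hfar j Hj))).
  specialize (T2 i l Hl (fun j Hj => Rle_lt_trans _ _ _ (Rmax_r N1 N2) (Hfar j Hj))).
  eapply Rle_trans.
  - apply rsum_le with (g := fun j => 2 * Cmod (m1 i j) ^ 2 + 2 * Cmod (m2 i j) ^ 2).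
    intros j _. apply sq_le_of_le_sum; [apply Cmod_ge_0 | apply Hm].
  - rewrite rsum_plus, !rsum_scal. lra.
Qed.

Lemma row_nonexp_entries_dom m m1 K :
  row_nonexp_entries d m1 -> (forall i j, Cmod (m i j) <= K * Cmod (m1 i j)) ->
  row_nonexp_entries d m.
Proof.
  intros H1 Hm. apply (row_nonexp_entries_of_tail _ (K ^ 2)); [apply pow2_ge_0|].
  intros eps Heps. destruct (row_nonexp_entries_tail _ _ H1 Heps) as [N [HN T1]].
  exists N. split; [assumption|]. intros i l Hl Hfar.
  eapply Rle_trans.
  - apply rsum_le with (g := fun j => K ^ 2 * Cmod (m1 i j) ^ 2). intros j _.
    rewrite <- Rpow_mult_distr. apply pow_incr. split; [apply Cmod_ge_0 | apply Hm].
  - rewrite rsum_scal. apply Rmult_le_compat_l; [apply pow2_ge_0 | exact (T1 i l Hl Hfar)].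
Qed.

Lemma row_nonexp_entries_approx m :
  (forall eps, 0 < eps -> exists m', row_nonexp_entries d m' /\
     forall i l, NoDup l -> rsum (fun j => Cmod (m i j - m' i j) ^ 2) l <= eps) ->
  row_nonexp_entries d m.
Proof.
  intros Happrox. apply (row_nonexp_entries_of_tail _ 4); [lra|]. intros eps Heps.
  destruct (Happrox eps Heps) as [m' [Hm' Hclose]].
  destruct (row_nonexp_entries_tail _ _ Hm' Heps) as [N [HN T']].
  exists N. split; [assumption|]. intros i l Hl Hfar.
  eapply Rle_trans.
  - apply rsum_le with (g := fun j => 2 * Cmod (m' i j) ^ 2 + 2 * Cmod (m i j - m' i j) ^ 2).
    intros j _. replace (m i j) with (m' i j + (m i j - m' i j))%C at 1 by ring.
    apply Cmod_plus_sq.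
  - rewrite rsum_plus, !rsum_scal.
    specialize (T' i l Hl Hfar). specialize (Hclose i l Hl). lra.
Qed.

Lemma sqsum_le_row_outside_ball m R0 eps i Bl :
  row_tail_le m R0 eps -> (forall j, In j Bl <-> d j i <= R0) ->
  sqsum_le (restrict (fun j => ~ In j Bl) (m i)) eps.
Proof.
  intros Htail HBl l Hl. rewrite sqsum_restrict. apply Htail.
  - apply NoDup_filter, Hl.
  - intros j Hj. apply filter_predb_In in Hj. rewrite HBl in Hj. lra.
Qed.

(* Column non-expansiveness in dual form, using (T x)_i = <x, T^* delta_i>. *)
Definition col_decay T : Prop :=
  forall eps, 0 < eps -> exists N, 0 < N /\
    forall i x S, sqsum_le x S -> (forall k, d k i <= N -> x k = 0%C) ->
      Cmod (T x i) ^ 2 <= eps * S.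

Lemma col_decay_of_le T K :
  0 <= K ->
  (forall eps, 0 < eps -> exists N, 0 < N /\
     forall i x S, sqsum_le x S -> (forall k, d k i <= N -> x k = 0%C) ->
       Cmod (T x i) ^ 2 <= K * eps * S) ->
  col_decay T.
Proof.
  intros HK HT eps Heps.
  destruct (HT (eps / (K + 1))) as [N [HN HTN]]; [apply Rdiv_lt_0_compat; lra|].
  exists N. split; [assumption|]. intros i x S Hx Hsupp.
  eapply Rle_trans; [exact (HTN i x S Hx Hsupp)|].
  apply Rmult_le_compat_r; [exact (sqsum_le_nonneg x S Hx)|].
  apply mul_div_succ_le; lra.
Qed.

Lemma row_nonexp_adj_of_col_decay T :
  linear_l2 T -> col_decay T -> row_nonexp_entries d (fun i j => Cconj (T (delta j) i)).
Proof.
  intros HT Hdecay. apply (row_nonexp_entries_of_tail _ 1); [lra|]. intros eps Heps.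
  destruct (Hdecay eps Heps) as [N [HN HTN]]. exists N. split; [assumption|].
  intros i L HL Hfar.
  rewrite (rsum_ext _ (fun j => Cmod (T (delta j) i) ^ 2))
    by (intros; rewrite Cmod_conj; reflexivity).
  rewrite Rmult_1_l. apply adj_row_sqsum_le_of_coord_bound; try assumption; [lra|].
  intros x S Hx Hsupp. apply (HTN i x S Hx).
  intros k Hk. apply Hsupp. intros HkL. specialize (Hfar k HkL). lra.
Qed.

(* Split x into its part on a finite set F' of indices far from i, handled
   by the column tail, and a remainder of arbitrarily small norm. *)
Lemma col_decay_of_row_nonexp_adj T M :
  linear_l2 T -> opnorm_le T M ->
  row_nonexp_entries d (fun i j => Cconj (T (delta j) i)) -> col_decay T.
Proof.
  intros HT HM Hcol. apply (col_decay_of_le _ 2); [lra|]. intros eps Heps.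
  destruct (row_nonexp_entries_tail _ _ Hcol Heps) as [N [HN Htail]].
  exists N. split; [assumption|]. intros i x S Hx Hsupp.
  apply Rle_plus_epsilon. intros e He.
  set (eta := e / (2 * M ^ 2 + 1)).
  assert (Heta : 0 < eta) by (apply Rdiv_lt_0_compat; pose proof (pow2_ge_0 M); lra).
  assert (Heta_e : 2 * M ^ 2 * eta <= e)
    by (apply mul_div_succ_le; [pose proof (pow2_ge_0 M) | ]; lra).
  destruct (sqsum_le_tail x S eta Hx Heta) as [F [HF Hrest]].
  set (F' := filter (predb (fun k => N < d k i)) F).
  assert (HF' : NoDup F') by (apply NoDup_filter, HF).
  assert (Hv : restrict (fun k => ~ In k F') x = restrict (fun k => ~ In k F) x).
  { apply functional_extensionality. intros k. unfold restrict, F'.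
    destruct (excluded_middle_informative (~ In k (filter _ F))) as [Hk | Hk],
      (excluded_middle_informative (~ In k F)) as [Hk' | Hk']; try reflexivity;
      rewrite filter_predb_In in Hk.
    - apply Hsupp. apply Rnot_lt_le. tauto.
    - tauto. }
  assert (Hu : Cmod (T (restrict (fun k => In k F') x) i) ^ 2 <= S * eps).
  { eapply Rle_trans; [apply linear_l2_restrict_list_sq_le; assumption|].
    apply Rmult_le_compat; try (apply rsum_nonneg; intros; apply pow2_ge_0).
    - apply Hx, HF'.
    - rewrite <- (rsum_ext (fun j => Cmod (Cconj (T (delta j) i)) ^ 2))
        by (intros; rewrite Cmod_conj; reflexivity).
      apply Htail; [assumption|]. intros j Hj. apply filter_predb_In in Hj. tauto. }
  assert (Hw : Cmod (T (restrict (fun k => ~ In k F') x) i) ^ 2 <= M ^ 2 * eta)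
    by (rewrite Hv; apply opnorm_le_coord; assumption).
  rewrite (linear_l2_split T (fun k => In k F') x i HT (ex_intro _ S Hx)).
  pose proof (Cmod_plus_sq (T (restrict (fun k => In k F') x) i)
                           (T (restrict (fun k => ~ In k F') x) i)).
  lra.
Qed.

End RowDecay.

Section Closure.
Context {I : Type}.
Implicit Types (A B : op I).

Lemma bounded_op_add A B : bounded_op A -> bounded_op B -> bounded_op (op_add A B).
Proof.
  intros [HA1 [HA2 [MA [HMA0 HMA]]]] [HB1 [HB2 [MB [HMB0 HMB]]]]. unfold op_add.
  split; [| split].
  - intros x y Hx Hy. rewrite HA1, HB1 by assumption.
    apply functional_extensionality. intros. ring.
  - intros c x Hx. rewrite HA2, HB2 by assumption.
    apply functional_extensionality. intros. ring.
  - exists (2 * (MA + MB)). split; [lra|]. intros x S Hx.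
    eapply sqsum_le_weaken; [apply sqsum_le_add; [apply HMA | apply HMB]; exact Hx|].
    replace (2 * (MA ^ 2 * S) + 2 * (MB ^ 2 * S)) with ((2 * MA ^ 2 + 2 * MB ^ 2) * S) by ring.
    apply Rmult_le_compat_r; [exact (sqsum_le_nonneg x S Hx) | nra].
Qed.

Lemma bounded_op_scal c A : bounded_op A -> bounded_op (op_scal c A).
Proof.
  intros [HA1 [HA2 [MA [HMA0 HMA]]]]. unfold op_scal. split; [| split].
  - intros x y Hx Hy. rewrite HA1 by assumption.
    apply functional_extensionality. intros. ring.
  - intros c' x Hx. rewrite HA2 by assumption.
    apply functional_extensionality. intros. ring.
  - exists (Cmod c * MA). split; [apply Rmult_le_pos; [apply Cmod_ge_0 | assumption]|].
    intros x S Hx. eapply sqsum_le_weaken; [apply sqsum_le_scal, HMA, Hx|].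
    right. ring.
Qed.

Lemma bounded_op_mul A B : bounded_op A -> bounded_op B -> bounded_op (op_mul A B).
Proof.
  intros [HA1 [HA2 [MA [HMA0 HMA]]]] [HB1 [HB2 [MB [HMB0 HMB]]]].
  assert (HBl2 : forall x, l2 x -> l2 (B x))
    by (intros x [S HS]; exists (MB ^ 2 * S); apply HMB, HS).
  unfold op_mul. split; [| split].
  - intros x y Hx Hy. rewrite HB1, HA1 by auto. reflexivity.
  - intros c x Hx. rewrite HB2, HA2 by auto. reflexivity.
  - exists (MA * MB). split; [apply Rmult_le_pos; assumption|].
    intros x S Hx. eapply sqsum_le_weaken; [apply HMA, HMB, Hx|]. right. ring.
Qed.

End Closure.

Section Products.
Context {I : Type} (d : I -> I -> R).
Hypothesis d_triangle : forall i j k, d i j <= d i k + d k j.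
Hypothesis balls_bounded : forall Rad, 0 < Rad -> exists M : nat, forall (i : I) (l : list I),
  NoDup l -> (forall j, In j l -> d j i <= Rad) -> (length l <= M)%nat.

(* If no list enumerated the ball, every duplicate-free list inside it could
   be extended, producing lists in the ball of every length. *)
Lemma ball_enum Rad :
  0 < Rad -> exists M : nat, forall i, exists Bl, NoDup Bl /\
    (forall j, In j Bl <-> d j i <= Rad) /\ (length Bl <= M)%nat.
Proof.
  intros HRad. destruct (balls_bounded Rad HRad) as [M HM]. exists M. intros i.
  apply NNPP. intros Hno.
  assert (Hlong : forall n,
    exists l, NoDup l /\ (forall j, In j l -> d j i <= Rad) /\ length l = n).
  { induction n as [|n [l [Hl [Hin Hlen]]]].
    - exists nil. repeat split; [constructor | intros j [] ].
    - assert (Hext : exists j, d j i <= Rad /\ ~ In j l).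
      { apply NNPP. intros Hnext. apply Hno. exists l.
        split; [assumption|]. split; [| exact (HM i l Hl Hin)].
        intros j. split; [apply Hin|]. intros Hj.
        apply NNPP. intros Hjl. apply Hnext. exists j. auto. }
      destruct Hext as [j [Hj Hjl]]. exists (j :: l). repeat split.
      + constructor; assumption.
      + intros k [<- | Hk]; auto.
      + simpl. congruence. }
  destruct (Hlong (S M)) as [l [Hl [Hin Hlen]]]. specialize (HM i l Hl Hin). lia.
Qed.

Lemma row_nonexp_entries_mul A B MA MB :
  linear_l2 A -> opnorm_le A MA -> opnorm_le B MB ->
  row_nonexp_entries d (fun i j => A (delta i) j) ->
  row_nonexp_entries d (fun i j => B (delta i) j) ->
  row_nonexp_entries d (fun i j => op_mul A B (delta i) j).
Proof.
  intros HA HMA HMB RA RB.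
  apply (row_nonexp_entries_of_tail _ _ (2 * MA ^ 2 + 2 * MB ^ 2));
    [pose proof (pow2_ge_0 MA); pose proof (pow2_ge_0 MB); lra|].
  intros eps Heps.
  destruct (row_nonexp_entries_tail _ _ _ RB Heps) as [R0 [HR0 TB]].
  destruct (ball_enum R0 HR0) as [n Hn]. pose proof (pos_INR n).
  destruct (row_nonexp_entries_tail _ _ (eps / (INR n + 1)) RA) as [N [HN TA]];
    [apply Rdiv_lt_0_compat; lra|].
  exists (N + R0). split; [lra|]. intros i L HL Hfar.
  destruct (Hn i) as [Bl [HBl [HBin HBlen]]].
  set (v := B (delta i)).
  assert (Hv : sqsum_le v (MB ^ 2 * 1)) by apply HMB, sqsum_le_delta.
  assert (Hin : rsum (fun k => Cmod (A (restrict (fun j => In j Bl) v) k) ^ 2) L <= MB ^ 2 * eps).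
  { eapply Rle_trans.
    - apply rsum_le with (g := fun k => sqsum v Bl * rsum (fun j => Cmod (A (delta j) k) ^ 2) Bl).
      intros k _. apply linear_l2_restrict_list_sq_le; assumption.
    - rewrite rsum_scal, rsum_comm. apply Rmult_le_compat.
      + apply rsum_nonneg. intros; apply pow2_ge_0.
      + apply rsum_nonneg. intros; apply rsum_nonneg; intros; apply pow2_ge_0.
      + rewrite Rmult_1_r in Hv. apply Hv, HBl.
      + rewrite <- (Rmult_1_r eps). apply (rsum_le_of_length_le _ _ n); [assumption | lra | lra |].
        intros j Hj. rewrite Rmult_1_r. apply TA; [assumption|]. intros k Hk.
        apply HBin in Hj. specialize (Hfar k Hk). specialize (d_triangle k i j). lra. }
  assert (Hout : rsum (fun k => Cmod (A (restrict (fun j => ~ In j Bl) v) k) ^ 2) L <= MA ^ 2 * eps)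
    by exact (HMA _ _ (sqsum_le_row_outside_ball d _ R0 eps i Bl TB HBin) L HL).
  unfold op_mul. fold v. eapply Rle_trans.
  - apply rsum_le with (g := fun k => 2 * Cmod (A (restrict (fun j => In j Bl) v) k) ^ 2
                                    + 2 * Cmod (A (restrict (fun j => ~ In j Bl) v) k) ^ 2).
    intros k _. rewrite (linear_l2_split A (fun j => In j Bl) v k HA (ex_intro _ _ Hv)).
    apply Cmod_plus_sq.
  - rewrite rsum_plus, !rsum_scal. lra.
Qed.

Lemma col_decay_mul A B MA MB :
  linear_l2 A -> opnorm_le A MA -> opnorm_le B MB ->
  col_decay d A -> col_decay d B -> col_decay d (op_mul A B).
Proof.
  intros HA HMA HMB DA DB.
  apply (col_decay_of_le _ _ (2 * MA ^ 2 + 2 * MB ^ 2));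
    [pose proof (pow2_ge_0 MA); pose proof (pow2_ge_0 MB); lra|].
  intros eps Heps.
  destruct (DA eps Heps) as [R0 [HR0 CA]].
  destruct (ball_enum R0 HR0) as [n Hn]. pose proof (pos_INR n).
  destruct (DB (eps / (INR n + 1))) as [N [HN CB]]; [apply Rdiv_lt_0_compat; lra|].
  exists (N + R0). split; [lra|]. intros i x S Hx Hsupp.
  assert (HS : 0 <= S) by exact (sqsum_le_nonneg x S Hx).
  destruct (Hn i) as [Bl [HBl [HBin HBlen]]].
  set (z := B x).
  assert (Hz : sqsum_le z (MB ^ 2 * S)) by (apply HMB, Hx).
  assert (Hin : Cmod (A (restrict (fun k => In k Bl) z) i) ^ 2 <= eps * S * MA ^ 2).
  { eapply Rle_trans; [apply linear_l2_restrict_list_sq_le; assumption|].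
    apply Rmult_le_compat; try (apply rsum_nonneg; intros; apply pow2_ge_0).
    - apply (rsum_le_of_length_le _ _ n); [assumption | lra | assumption |].
      intros k Hk. apply CB; [assumption|]. intros j Hj. apply Hsupp.
      apply HBin in Hk. specialize (d_triangle j i k). lra.
    - apply adj_row_sqsum_le_opnorm; assumption. }
  assert (Hout : Cmod (A (restrict (fun k => ~ In k Bl) z) i) ^ 2 <= eps * (MB ^ 2 * S)).
  { apply CA; [apply sqsum_le_restrict, Hz|].
    intros k Hk. apply restrict_out. rewrite HBin. tauto. }
  unfold op_mul. fold z.
  rewrite (linear_l2_split A (fun k => In k Bl) z i HA (ex_intro _ _ Hz)).
  pose proof (Cmod_plus_sq (A (restrict (fun k => In k Bl) z) i)
                           (A (restrict (fun k => ~ In k Bl) z) i)).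
  nra.
Qed.

Lemma inC_mul (A B : op I) :
  inC d A -> inC d B -> inC d (op_mul A B).
Proof.
  intros [HA [RA CA]] [HB [RB CB]].
  pose proof HA as [_ [_ [MA [_ HMA]]]]. pose proof HB as [_ [_ [MB [_ HMB]]]].
  pose proof (bounded_op_linear A HA) as HAl. pose proof (bounded_op_linear B HB) as HBl.
  split; [apply bounded_op_mul; assumption|]. split.
  - exact (row_nonexp_entries_mul A B MA MB HAl HMA HMB RA RB).
  - apply row_nonexp_adj_of_col_decay; [apply bounded_op_linear, bounded_op_mul; assumption|].
    apply (col_decay_mul A B MA MB HAl HMA HMB).
    + exact (col_decay_of_row_nonexp_adj d A MA HAl HMA CA).
    + exact (col_decay_of_row_nonexp_adj d B MB HBl HMB CB).
Qed.

End Products.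

Section Membership.
Context {I : Type} (d : I -> I -> R).
Implicit Types (A B : op I).

Lemma inC_add A B : inC d A -> inC d B -> inC d (op_add A B).
Proof.
  intros [HA [RA CA]] [HB [RB CB]]. split; [apply bounded_op_add; assumption|]. split.
  - apply (row_nonexp_entries_add d _ _ _ RA RB). intros i j. apply Cmod_triangle.
  - apply (row_nonexp_entries_add d _ _ _ CA CB). intros i j.
    unfold op_add. rewrite Cplus_conj. apply Cmod_triangle.
Qed.

Lemma inC_scal c A : inC d A -> inC d (op_scal c A).
Proof.
  intros [HA [RA CA]]. split; [apply bounded_op_scal, HA|]. split.
  - apply (row_nonexp_entries_dom d _ _ (Cmod c) RA). intros i j.
    unfold op_scal. rewrite Cmod_mult. lra.
  - apply (row_nonexp_entries_dom d _ _ (Cmod c) CA). intros i j.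
    unfold op_scal. rewrite Cmult_conj, Cmod_mult, Cmod_conj. lra.
Qed.

Lemma inC_adjoint A B :
  inC d A -> bounded_op B -> (forall i j, B (delta i) j = Cconj (A (delta j) i)) -> inC d B.
Proof.
  intros [_ [RA CA]] HB Hadj. split; [assumption|]. split.
  - replace (fun i j => B (delta i) j) with (fun i j => Cconj (A (delta j) i)); [assumption|].
    apply functional_extensionality. intros i. apply functional_extensionality. intros j.
    symmetry. apply Hadj.
  - replace (fun i j => Cconj (B (delta j) i)) with (fun i j => A (delta i) j); [assumption|].
    apply functional_extensionality. intros i. apply functional_extensionality. intros j.
    rewrite Hadj, Cconj_conj. reflexivity.
Qed.

Lemma inC_filter_limit {S : Type} (F : (S -> Prop) -> Prop) (Aj : S -> op I) A :
  ProperFilter F -> (forall j, inC d (Aj j)) -> bounded_op A ->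
  (forall eps, 0 < eps ->
     F (fun j => exists c, 0 <= c /\ c < eps /\ opnorm_le (op_sub A (Aj j)) c)) ->
  inC d A.
Proof.
  intros HF HAj HA Hlim.
  assert (Hclose : forall eps, 0 < eps ->
    exists j c, c ^ 2 <= eps /\ opnorm_le (op_sub A (Aj j)) c).
  { intros eps Heps.
    destruct (filter_ex _ (Hlim (Rmin 1 eps) (Rmin_pos _ _ Rlt_0_1 Heps)))
      as [j [c [Hc0 [Hc Hnorm]]]].
    exists j, c. split; [| assumption].
    pose proof (Rmin_l 1 eps). pose proof (Rmin_r 1 eps). nra. }
  split; [assumption|]. split; apply row_nonexp_entries_approx; intros eps Heps;
    destruct (Hclose eps Heps) as [j [c [Hc Hnorm]]];
    destruct (HAj j) as [HAj_bd [RAj CAj]].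
  - exists (fun i k => Aj j (delta i) k). split; [assumption|]. intros i l Hl.
    eapply Rle_trans; [exact (Hnorm (delta i) 1 (sqsum_le_delta i) l Hl) | lra].
  - exists (fun i k => Cconj (Aj j (delta k) i)). split; [assumption|]. intros i l Hl.
    rewrite (rsum_ext _ (fun k => Cmod (op_sub A (Aj j) (delta k) i) ^ 2)).
    + eapply Rle_trans; [| exact Hc]. apply adj_row_sqsum_le_opnorm; [| assumption | assumption].
      apply linear_l2_sub; apply bounded_op_linear; assumption.
    + intros k _. unfold op_sub. rewrite <- Cminus_conj, Cmod_conj. reflexivity.
Qed.

End Membership.

Theorem theorem7p7 (I : Type) (d : I -> I -> R)
  (hd : quasi_distance d)
  (hcount : exists f : I -> nat, forall i j, f i = f j -> i = j)
  (hball : forall Rad, 0 < Rad -> exists M : nat, forall (i : I) (l : list I),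
             NoDup l -> (forall j, In j l -> d j i <= Rad) -> (length l <= M)%nat) :
  (* (1) *)
  (forall A B : op I, inC d A -> inC d B -> inC d (op_add A B)) /\
  (forall (c : C) (A : op I), inC d A -> inC d (op_scal c A)) /\
  (* (2) *)
  (forall A B : op I, inC d A -> inC d B -> inC d (op_mul A B)) /\
  (* (3) *)
  (forall (S : Type) (F : (S -> Prop) -> Prop), ProperFilter F ->
     forall (Aj : S -> op I) (A : op I),
       (forall j, inC d (Aj j)) -> bounded_op A ->
       (forall eps, 0 < eps ->
          F (fun j => exists c, 0 <= c /\ c < eps /\ opnorm_le (op_sub A (Aj j)) c)) ->
       inC d A) /\
  (* closure under adjoints (part of "C is a C*-algebra"): B = A^* *)
  (forall A B : op I, inC d A -> bounded_op B ->
     (forall i j, B (delta i) j = Cconj (A (delta j) i)) -> inC d B).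
Proof.
  (* Only the triangle inequality and the uniform bound on balls are used. *)
  destruct hd as (_ & _ & _ & d_triangle).
  split; [| split; [| split; [| split]]].
  - exact (inC_add d).
  - exact (inC_scal d).
  - exact (inC_mul d d_triangle hball).
  - intros S F HF Aj A. exact (inC_filter_limit d F Aj A HF).
  - exact (inC_adjoint d).
Qed.
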